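(* Let $\mathcal{C}$ be a closed convex set with $\overline\Pi=\mathcal{C}\cap\Pi$ closed and convex, let $S=(x_1,\dots,x_m)$ be i.i.d. from $\mathcal{D}_{\mathcal{X}}$ with empirical distribution $\widehat{\mathcal{D}}_{\mathcal{X}}$, let $\mathcal{F}=\{x\mapsto\mathsf{B}_F(\pi(x)\parallel\pi_0(x)):\pi\in\overline\Pi\}\cup\{x\mapsto\mathsf{B}_F(\pi'(x)\parallel\pi(x)):\pi,\pi'\in\overline\Pi\}$ and $\epsilon_m=\sup_{f\in\mathcal{F}}|\mathbb{E}_{\mathcal{D}_{\mathcal{X}}}[f]-\mathbb{E}_{\widehat{\mathcal{D}}_{\mathcal{X}}}[f]|$. Let $\widehat\pi$ minimize $\mathbb{E}_{\mathcal{D}_{\mathcal{X}}}[\mathsf{B}_F(\pi(x)\parallel\pi_0(x))]$ and $\widehat\pi_S$ minimize $\mathbb{E}_{\widehat{\mathcal{D}}_{\mathcal{X}}}[\mathsf{B}_F(\pi(x)\parallel\pi_0(x))]$ over $\pi\in\overline\Pi$, and assume $\pi^*\in\overline\Pi$. Then $$\mathbb{E}_{\mathcal{D}_{\mathcal{X}}}[\mathsf{B}_F(\pi^*(x)\parallel\widehat\pi_S(x))]-\mathbb{E}_{\mathcal{D}_{\mathcal{X}}}[\mathsf{B}_F(\pi^*(x)\parallel\pi_0(x))]\le6\epsilon_m+\mathbb{E}_{\mathcal{D}_{\mathcal{X}}}[\mathsf{B}_F(\pi^*(x)\parallel\pi_0(x))]-2\,\mathbb{E}_{\mathcal{D}_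{\mathcal{X}}}[\mathsf{B}_F(\widehat\pi(x)\parallel\pi_0(x))].$$
   Context: $\mathcal{X},\mathcal{Y}$ finite; models are maps $\pi\colon\mathcal{X}\to\Delta(\mathcal{Y})$; $\Pi\subseteq\Delta(\mathcal{Y})^{\mathcal{X}}$ closed and convex; $\pi_0$ a baseline model; $\pi^*$ a reference model; $\mathcal{D}_{\mathcal{X}}$ a full-support distribution on $\mathcal{X}$. $F$ is convex and differentiable on the interior of its domain (containing $\Delta(\mathcal{Y})$, relevant values lying where $\nabla F$ is defined), $\mathsf{B}_F(p\parallel q)=F(p)-F(q)-\langle\nabla F(q),p-q\rangle$. *)

From HB Require Import structures.
From mathcomp Require Import all_boot all_order all_algebra.
From mathcomp Require Import all_classical all_reals all_analysis.
Set Implicit Arguments. Unset Strict Implicit. Unset Printing Implicit Defensive.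
Import Order.TTheory GRing.Theory Num.Theory.
Import numFieldNormedType.Exports.
Local Open Scope ring_scope.
Local Open Scope classical_set_scope.

Section Defs.
Variables (R : realType) (X Y : finType).

Definition simplex : set (Y -> R) :=
  [set p | (forall y, 0 <= p y) /\ \sum_y p y = 1].

Definition dotv (p q : Y -> R) : R := \sum_y p y * q y.

Definition supn (h : Y -> R) : R := \big[Num.max/0]_y `|h y|.

Definition convex_vset (D : set (Y -> R)) : Prop :=
  forall p q, D p -> D q -> forall t : R, 0 <= t <= 1 ->
    D (fun y => t * p y + (1 - t) * q y).

Definition convex_fun_on (D : set (Y -> R)) (F : (Y -> R) -> R) : Prop :=
  forall p q, D p -> D q -> forall t : R, 0 <= t <= 1 ->
    F (fun y => t * p y + (1 - t) * q y) <= t * F p + (1 - t) * F q.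

Definition vinterior (D : set (Y -> R)) : set (Y -> R) :=
  [set q | exists2 d : R, 0 < d &
     forall h : Y -> R, (forall y, `|h y| < d) -> D (fun y => q y + h y)].

Definition has_gradient (F : (Y -> R) -> R) (g q : Y -> R) : Prop :=
  forall e : R, 0 < e -> exists2 d : R, 0 < d &
    forall h : Y -> R, (forall y, `|h y| < d) ->
      `|F (fun y => q y + h y) - F q - dotv g h| <= e * supn h.

Definition bregman (F : (Y -> R) -> R) (gradF : (Y -> R) -> (Y -> R))
  (p q : Y -> R) : R :=
  F p - F q - dotv (gradF q) (fun y => p y - q y).

Definition models_set (P : set (X -> Y -> R)) : Prop :=
  forall pi, P pi -> forall x, simplex (pi x).

Definition convex_models (P : set (X -> Y -> R)) : Prop :=
  forall p1 p2, P p1 -> P p2 -> forall t : R, 0 <= t <= 1 ->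
    P (fun x y => t * p1 x y + (1 - t) * p2 x y).

(* closedness in R^(X x Y) (sequential closedness) *)
Definition closed_models (P : set (X -> Y -> R)) : Prop :=
  forall (u : nat -> X -> Y -> R) (pi : X -> Y -> R),
    (forall n, P (u n)) ->
    (forall x y, (fun n => u n x y) @ \oo --> pi x y) -> P pi.

Definition full_support_distr (D : X -> R) : Prop :=
  (forall x, 0 < D x) /\ \sum_x D x = 1.

Definition expect (D : X -> R) (f : X -> R) : R := \sum_x D x * f x.

Definition empirical_distr (m : nat) (S : 'I_m -> X) : X -> R :=
  fun x => #|[set i | S i == x]|%:R / m%:R.

Definition bregman_class (F : (Y -> R) -> R) (gradF : (Y -> R) -> (Y -> R))
  (Pb : set (X -> Y -> R)) (pi0 : X -> Y -> R) : set (X -> R) :=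
  [set f | (exists2 pi, Pb pi & f = (fun x => bregman F gradF (pi x) (pi0 x)))
        \/ (exists pi pi', [/\ Pb pi, Pb pi' &
              f = (fun x => bregman F gradF (pi' x) (pi x))])].

Definition unif_dev (D Dhat : X -> R) (Fam : set (X -> R)) : \bar R :=
  ereal_sup [set (`|expect D f - expect Dhat f|)%:E | f in Fam].

End Defs.

From HB Require Import structures.
From mathcomp Require Import all_boot all_order all_algebra.
From mathcomp Require Import all_classical all_reals all_analysis.
From mathcomp Require Import ring lra.
Import Order.TTheory GRing.Theory Num.Theory.
Import numFieldNormedType.Exports.
Local Open Scope ring_scope.
Local Open Scope classical_set_scope.

(* The empirical minimizer [pihatS] is a Bregman projection of [pi0] onto the
   convex set [C `&` Pi] for the empirical distribution.  Its first-order
   optimality condition, combined with the three-point identity of Bregman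
   divergences, gives the generalized Pythagorean inequality
     E_S[B(pistar || pihatS)] <= E_S[B(pistar || pi0)] - E_S[B(pihatS || pi0)].
   Transferring its three terms from the sample to D_X costs 3 eps_m, and the
   population optimality of [pihat] (against [pihatS] and against [pistar])
   turns the result into the stated bound. *)

Section Bregman.
Local Set Implicit Arguments. Local Unset Strict Implicit.
Variables (R : realType) (Y : finType).
Variables (F : (Y -> R) -> R) (gradF : (Y -> R) -> (Y -> R)).
Implicit Types (p q r g h : Y -> R).

Lemma dotvZr g h (t : R) : dotv g (fun y => t * h y) = t * dotv g h.
Proof. by rewrite /dotv mulr_sumr; apply: eq_bigr => y _ /=; ring. Qed.

Lemma simplex_le1 p y : simplex p -> p y <= 1.
Proof.
move=> [p_ge0 <-]; rewrite (bigD1 y) //= lerDl.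
exact: sumr_ge0.
Qed.

Lemma simplex_normB_le1 p q y : simplex p -> simplex q -> `|p y - q y| <= 1.
Proof.
move=> Sp Sq; have := simplex_le1 y Sp; have := simplex_le1 y Sq.
have := Sp.1 y; have := Sq.1 y.
rewrite ler_norml; move=> *; apply/andP; split; lra.
Qed.

Lemma bregman_three_point p q r :
  bregman F gradF p r = bregman F gradF p q + bregman F gradF q r
    + dotv (fun y => gradF q y - gradF r y) (fun y => p y - q y).
Proof.
rewrite /bregman /dotv.
have -> : \sum_y gradF r y * (p y - r y) =
  \sum_y gradF q y * (p y - q y) + \sum_y gradF r y * (q y - r y)
  - \sum_y (gradF q y - gradF r y) * (p y - q y).
  by rewrite -big_split -sumrB; apply: eq_bigr => y _ /=; ring.
ring.
Qed.

Lemma bregman_segmentE q r h (t : R) :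
  bregman F gradF (fun y => q y + t * h y) r - bregman F gradF q r
  = (F (fun y => q y + t * h y) - F q - t * dotv (gradF q) h)
    + t * dotv (fun y => gradF q y - gradF r y) h.
Proof.
rewrite /bregman /dotv !mulr_sumr.
have -> : \sum_y gradF r y * (q y + t * h y - r y) =
  \sum_y gradF r y * (q y - r y) + \sum_y t * (gradF q y * h y)
  - \sum_y t * ((gradF q y - gradF r y) * h y).
  by rewrite -big_split -sumrB; apply: eq_bigr => y _ /=; ring.
ring.
Qed.

Lemma has_gradient_segment g q h :
  has_gradient F g q -> (forall y, `|h y| <= 1) ->
  forall e, 0 < e -> exists2 d, 0 < d & forall t, 0 < t < d ->
    F (fun y => q y + t * h y) - F q - t * dotv g h <= e * t.
Proof.
move=> gradq h_le1 e e_gt0; have [d d_gt0 Hd] := gradq e e_gt0.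
exists d => // t /andP[t_gt0 t_ltd].
have th_le y : `|t * h y| <= t.
  by rewrite normrM gtr0_norm // ler_piMr // ltW.
rewrite -dotvZr; apply: le_trans (ler_norm _) _.
apply: le_trans (Hd _ (fun y => le_lt_trans (th_le y) t_ltd)) _.
by rewrite ler_pM2l //; apply: bigmax_le => //; exact: ltW.
Qed.

Lemma expect_bregman_three_point (X : finType) (w : X -> R) (p q r : X -> Y -> R) :
  expect w (fun x => bregman F gradF (p x) (r x))
  = expect w (fun x => bregman F gradF (p x) (q x))
    + expect w (fun x => bregman F gradF (q x) (r x))
    + expect w (fun x =>
        dotv (fun y => gradF (q x) y - gradF (r x) y) (fun y => p x y - q x y)).
Proof.
rewrite /expect -!big_split; apply: eq_bigr => x _ /=.
rewrite (bregman_three_point (p x) (q x) (r x)); ring.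
Qed.

Section FirstOrderOptimality.
Variables (X : finType) (w : X -> R) (q : X -> Y -> R).
Hypothesis w_ge0 : forall x, 0 <= w x.
Hypothesis gradq : forall x, has_gradient F (gradF (q x)) (q x).

Lemma has_gradient_segment_uniform (h : X -> Y -> R) :
  (forall x y, `|h x y| <= 1) ->
  forall e, 0 < e -> exists2 d, 0 < d & forall x t, 0 < t < d ->
    F (fun y => q x y + t * h x y) - F (q x)
      - t * dotv (gradF (q x)) (h x) <= e * t.
Proof.
move=> h_le1 e e_gt0.
have /choice[d Hd] x : exists d, 0 < d /\ forall t, 0 < t < d ->
    F (fun y => q x y + t * h x y) - F (q x)
      - t * dotv (gradF (q x)) (h x) <= e * t.
  have [d ? ?] := has_gradient_segment (gradq x) (h_le1 x) e_gt0.
  by exists d.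
exists (\big[Num.min/1]_x d x).
  by apply: lt_bigmin => // x _; case: (Hd x).
move=> x t /andP[t_gt0 t_lt]; apply: (Hd x).2; rewrite t_gt0.
exact: lt_le_trans t_lt (bigmin_le _ _ _).
Qed.

Lemma bregman_first_order_optimality (r h : X -> Y -> R) :
  (forall x y, `|h x y| <= 1) ->
  (forall t, 0 < t <= 1 ->
     expect w (fun x => bregman F gradF (q x) (r x))
     <= expect w (fun x => bregman F gradF (fun y => q x y + t * h x y) (r x))) ->
  0 <= expect w (fun x => dotv (fun y => gradF (q x) y - gradF (r x) y) (h x)).
Proof.
move=> h_le1 qmin; set A := expect _ _; set K := \sum_x w x.
have K_ge0 : 0 <= K by exact: sumr_ge0.
apply/ler_addgt0Pr => e e_gt0.
(* A small step t along the segment has gain >= 0 and loss <= t (e' K + A),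
   where e' bounds the linearization remainders. *)
pose e' := e / (K + 1).
have e'_gt0 : 0 < e' by rewrite divr_gt0 //; lra.
have e'K : e' * (K + 1) = e by rewrite /e' divfK // gt_eqF //; lra.
have [d d_gt0 Hd] := has_gradient_segment_uniform h_le1 e'_gt0.
have [t [t_gt0 t_ltd t_le1]] : exists t, [/\ 0 < t, t < d & t <= 1].
  exists (Num.min d 1 / 2).
  have : 0 < Num.min d 1 by rewrite lt_min d_gt0 ltr01.
  have : Num.min d 1 <= d by rewrite ge_min lexx.
  have : Num.min d 1 <= 1 by rewrite ge_min lexx orbT.
  by split; lra.
have loss : expect w (fun x => bregman F gradF (fun y => q x y + t * h x y) (r x))
            - expect w (fun x => bregman F gradF (q x) (r x)) <= t * (e' * K + A).
  rewrite mulrDr /A /expect /K -sumrB !mulr_sumr -big_split /=.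
  apply: ler_sum => x _; rewrite -mulrBr bregman_segmentE mulrDr.
  have := Hd x t; rewrite t_gt0 t_ltd => /(_ isT) rem_le.
  set D := dotv (fun y => gradF (q x) y - gradF (r x) y) (h x).
  have -> : t * (e' * w x) + t * (w x * D) = w x * (e' * t) + w x * (t * D).
    by ring.
  exact: lerD (ler_wpM2l (w_ge0 x) rem_le) (lexx _).
have := qmin t; rewrite t_gt0 t_le1 -subr_ge0 => /(_ isT) gain.
have : 0 <= e' * K + A by rewrite -(pmulr_rge0 _ t_gt0); exact: le_trans gain loss.
lra.
Qed.

Lemma bregman_pythagoras (P : set (X -> Y -> R)) (pstar r : X -> Y -> R) :
  convex_models P -> models_set P -> P pstar -> P q ->
  (forall pi, P pi ->
     expect w (fun x => bregman F gradF (q x) (r x))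
     <= expect w (fun x => bregman F gradF (pi x) (r x))) ->
  expect w (fun x => bregman F gradF (pstar x) (q x))
  <= expect w (fun x => bregman F gradF (pstar x) (r x))
     - expect w (fun x => bregman F gradF (q x) (r x)).
Proof.
move=> Pconv Psimplex Pstar Pq qmin.
have opt : 0 <= expect w (fun x =>
    dotv (fun y => gradF (q x) y - gradF (r x) y) (fun y => pstar x y - q x y)).
  apply: bregman_first_order_optimality => [x y|t /andP[t_gt0 t_le1]].
    exact: simplex_normB_le1 (Psimplex _ Pstar x) (Psimplex _ Pq x).
  apply: qmin; have -> : (fun x y => q x y + t * (pstar x y - q x y))
                         = (fun x y => t * pstar x y + (1 - t) * q x y).
    by apply: funext => x; apply: funext => y; ring.
  by apply: Pconv; rewrite ?(ltW t_gt0).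
have := @expect_bregman_three_point X w pstar q r; lra.
Qed.

End FirstOrderOptimality.

End Bregman.

Lemma empirical_distr_ge0 {R : realType} {X : finType} (m : nat) (S : 'I_m -> X) x :
  0 <= @empirical_distr R X m S x.
Proof. exact: divr_ge0. Qed.

Lemma unif_dev_ub {R : realType} {X : finType} (D Dhat : X -> R) (Fam : set (X -> R)) f :
  Fam f -> ((`|expect D f - expect Dhat f|)%:E <= unif_dev D Dhat Fam)%E.
Proof. by move=> Famf; apply: ereal_sup_ubound; exists f. Qed.

Theorem corollary2 (R : realType) (X Y : finType)
  (Dom : set (Y -> R)) (F : (Y -> R) -> R) (gradF : (Y -> R) -> (Y -> R))
  (Pi C : set (X -> Y -> R)) (pi0 pistar : X -> Y -> R) (DX : X -> R)
  (m : nat) (S : 'I_m -> X) (pihat pihatS : X -> Y -> R) :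
  (* F convex on its (convex) domain containing Delta(Y), differentiable on
     the interior of its domain with gradient gradF *)
  convex_vset Dom -> (@simplex R Y) `<=` Dom -> convex_fun_on Dom F ->
  (forall q, vinterior Dom q -> has_gradient F (gradF q) q) ->
  (* Pi closed convex set of models, pi0 a model, D_X full support *)
  models_set Pi -> closed_models Pi -> convex_models Pi ->
  (forall x, simplex (pi0 x)) ->
  full_support_distr DX ->
  (* C closed convex, Pibar = C /\ Pi closed convex *)
  closed_models C -> convex_models C ->
  closed_models (C `&` Pi) -> convex_models (C `&` Pi) ->
  (* relevant values lie where gradF is defined *)
  (forall x, vinterior Dom (pi0 x)) ->
  (forall pi, (C `&` Pi) pi -> forall x, vinterior Dom (pi x)) ->
  (* sample of size m >= 1 *)
  (0 < m)%N ->
  (C `&` Pi) pistar ->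
  (* pihat minimizes the population objective over Pibar *)
  (C `&` Pi) pihat ->
  (forall pi, (C `&` Pi) pi ->
     expect DX (fun x => bregman F gradF (pihat x) (pi0 x))
     <= expect DX (fun x => bregman F gradF (pi x) (pi0 x))) ->
  (* pihatS minimizes the empirical objective over Pibar *)
  (C `&` Pi) pihatS ->
  (forall pi, (C `&` Pi) pi ->
     expect (@empirical_distr R X m S) (fun x => bregman F gradF (pihatS x) (pi0 x))
     <= expect (@empirical_distr R X m S) (fun x => bregman F gradF (pi x) (pi0 x))) ->
  ((expect DX (fun x => bregman F gradF (pistar x) (pihatS x))
    - expect DX (fun x => bregman F gradF (pistar x) (pi0 x)))%:E
   <= 6%:E * unif_dev DX (@empirical_distr R X m S) (bregman_class F gradF (C `&` Pi) pi0)
      + (expect DX (fun x => bregman F gradF (pistar x) (pi0 x))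
         - 2 * expect DX (fun x => bregman F gradF (pihat x) (pi0 x)))%:E)%E.
Proof.
move=> _ _ _ gradF_int Pi_simplex _ _ _ _ _ _ _ Pb_conv _ Pb_int _
  Pb_star _ pihat_min Pb_S pihatS_min.
have pyth := bregman_pythagoras (@empirical_distr_ge0 R X m S)
  (fun x => gradF_int _ (Pb_int _ Pb_S x)) Pb_conv
  (fun pi Pb_pi => Pi_simplex pi Pb_pi.2) Pb_star Pb_S pihatS_min.
set eps := unif_dev _ _ _.
have dev f : bregman_class F gradF (C `&` Pi) pi0 f ->
    ((`|expect DX f - expect (@empirical_distr R X m S) f|)%:E <= eps)%E.
  exact: unif_dev_ub.
have dev_star_S := dev (fun x => bregman F gradF (pistar x) (pihatS x))
  ltac:(by right; exists pihatS, pistar).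
have dev_star_0 := dev (fun x => bregman F gradF (pistar x) (pi0 x))
  ltac:(by left; exists pistar).
have dev_S_0 := dev (fun x => bregman F gradF (pihatS x) (pi0 x))
  ltac:(by left; exists pihatS).
have hat_star := pihat_min _ Pb_star.
have hat_S := pihat_min _ Pb_S.
clear dev; case: eps dev_star_S dev_star_0 dev_S_0 => [eps| |].
- rewrite !lee_fin !ler_norml => /andP[? ?] /andP[? ?] /andP[? ?]; lra.
- by move=> *; rewrite mulry gtr0_sg // mul1e addye // leey.
- by move=> dev_neg; rewrite leeNy_eq in dev_neg.
Qed.
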